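(* Let $R$ be a ring and $x\in J(R)$, the Jacobson radical of $R$. Then $H^1_x(R)=0$ if and only if $x$ is nilpotent.
   Context: All rings are commutative with identity. $H^1_x(R)$ is the first cohomology of the complex $0\to R\to R_x\to0$ ($R$ in degree $0$, natural localization map), i.e. $H^1_x(R)=R_x/\operatorname{im}(R\to R_x)$. *)

From mathcomp Require Import all_boot all_algebra.
Set Implicit Arguments. Unset Strict Implicit. Unset Printing Implicit Defensive.
Import GRing.Theory.
Local Open Scope ring_scope.

Definition is_ideal (R : comPzRingType) (I : R -> Prop) : Prop :=
  [/\ I 0,
      (forall a b, I a -> I b -> I (a + b)) &
      (forall r a, I a -> I (r * a))].

Definition is_maximal_ideal (R : comPzRingType) (M : R -> Prop) : Prop :=
  [/\ is_ideal M, ~ M 1 &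
      (forall J : R -> Prop, is_ideal J -> (forall a, M a -> J a) ->
         ~ J 1 -> forall a, J a -> M a)].

Definition jacobson (R : comPzRingType) (x : R) : Prop :=
  forall M : R -> Prop, is_maximal_ideal M -> M x.

(* The localization R_x: elements are fractions a / x^n, represented by
   pairs (a, n), with (a, n) ~ (b, m) iff x^k (a x^m - b x^n) = 0 for some k. *)
Definition loc_eq (R : comPzRingType) (x : R) (p q : R * nat) : Prop :=
  exists k : nat, x ^+ k * (p.1 * x ^+ q.2 - q.1 * x ^+ p.2) = 0.

Definition loc_map (R : comPzRingType) (x : R) (r : R) : R * nat := (r, 0%N).

(* H^1_x(R) = R_x / im(R -> R_x) vanishes iff the map R -> R_x is surjective. *)
Definition H1_vanishes (R : comPzRingType) (x : R) : Prop :=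
  forall f : R * nat, exists r : R, loc_eq x f (loc_map x r).

Definition nilpotent (R : comPzRingType) (x : R) : Prop :=
  exists n : nat, x ^+ n = 0.

(* If R -> R_x is onto, then 1/x = r/1 in R_x for some r, i.e. x^k (1 - r x) = 0
   for some k.  As x lies in every maximal ideal, 1 - r x lies in none, so it is
   a unit (Krull's lemma, via Zorn) and x^k = 0.  Conversely, if x is nilpotent
   then R_x = 0 and every fraction is the image of 0. *)
From mathcomp Require Import all_boot all_algebra.
From mathcomp Require Import boolp classical_sets.
Set Implicit Arguments.
Unset Strict Implicit.
Import GRing.Theory.
Local Open Scope classical_set_scope.
Local Open Scope ring_scope.

Section MaximalIdeals.
Variable R : comPzRingType.

Lemma proper_ideal_sub_maximal (I : R -> Prop) :
  is_ideal I -> ~ I 1 -> exists2 M, is_maximal_ideal M & forall a, I a -> M a.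
Proof.
move=> [I0 ID IM] I1.
(* Zorn needs an upper bound for the empty chain too, so [I `<=` J] is only
   required of nonempty candidates [J]. *)
pose P (J : set R) := [/\ ~ J 1, (forall a b, J a -> J b -> J (a + b)),
  (forall r a, J a -> J (r * a)) & forall a, J a -> I `<=` J].
have [A [[A1 AD AM AI] Amax]] :
    exists A, P A /\ forall B, A `<` B -> ~ P B.
  apply: Zorn_bigcup => F FP Ftot; split.
  - by case=> X FX X1; have [] := FP X FX.
  - move=> a b [X FX Xa] [Y FY Yb].
    have [XY|YX] := Ftot X Y FX FY.
      by exists Y => //; have [_ YD _ _] := FP Y FY; apply: YD => //; apply: XY.
    by exists X => //; have [_ XD _ _] := FP X FX; apply: XD => //; apply: YX.
  - by move=> r a [X FX Xa]; exists X => //; have [_ _ XM _] := FP X FX; apply: XM.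
  - move=> a [X FX Xa] b Ib; have [_ _ _ XI] := FP X FX.
    by exists X => //; apply: XI Xa _ Ib.
have IA : I `<=` A.
  apply: contrapT => nIA; have A_empty a : ~ A a by move=> /AI.
  apply: (Amax I); first by split=> [a /A_empty | /(_ 0 I0) /A_empty].
  by split=> // _ _.
exists A => //; split; [by split; [apply: IA | |] | by [] |].
move=> J [J0 JD JM] AJ J1 a Ja; apply: contrapT => nAa.
apply: (Amax J); first by split=> // /(_ a Ja).
by split=> // b _ c /IA /AJ.
Qed.

Lemma nonunit_in_maximal_ideal (c : R) :
  ~ (exists s, s * c = 1) -> exists2 M, is_maximal_ideal M & M c.
Proof.
move=> c_nonunit.
pose I a := exists s, a = s * c.
have I_ideal : is_ideal I.
  split; first by exists 0; rewrite mul0r.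
  - by move=> a b [s ->] [t ->]; exists (s + t); rewrite mulrDl.
  - by move=> r a [s ->]; exists (r * s); rewrite mulrA.
have [|M Mmax IM] := proper_ideal_sub_maximal I_ideal.
  by case=> s /esym sc; apply: c_nonunit; exists s.
by exists M => //; apply: IM; exists 1; rewrite mul1r.
Qed.

Lemma jacobson_unit_1subr (x : R) :
  jacobson x -> forall r, exists s, s * (1 - r * x) = 1.
Proof.
move=> hx r; apply: contrapT => /nonunit_in_maximal_ideal [M Mmax M1rx].
have Mx := hx M Mmax; case: Mmax => [[_ MD MM] M1 _]; apply: M1.
by have := MD _ _ M1rx (MM r x Mx); rewrite subrK.
Qed.

End MaximalIdeals.

Lemma nilpotent_H1_vanishes (R : comPzRingType) (x : R) :
  nilpotent x -> H1_vanishes x.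
Proof.
by move=> [n xn] [a m]; exists 0; exists n; rewrite xn mul0r.
Qed.

Lemma H1_vanishes_expr_mul_1subr (R : comPzRingType) (x : R) :
  H1_vanishes x -> exists r k, x ^+ k * (1 - r * x) = 0.
Proof.
move=> /(_ (1, 1%N)) [r [k /=]]; rewrite expr0 expr1 !mulr1 => xk1rx.
by exists r, k.
Qed.

Theorem lemma3p3 (R : comPzRingType) (x : R) (hx : jacobson x) :
  H1_vanishes x <-> nilpotent x.
Proof.
split; last exact: nilpotent_H1_vanishes.
move=> /H1_vanishes_expr_mul_1subr [r [k xk1rx]].
have [s s1rx] := jacobson_unit_1subr hx r.
by exists k; rewrite -[x ^+ k]mulr1 -s1rx mulrCA xk1rx mulr0.
Qed.
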